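(* There is an absolute constant $c$ such that the following holds. Let $\mu>0$, $n$ be such that $n_0:=n-\mu^2/4-1/2>0$, and let $\ell_0<\ell_1<n_0$ be nonnegative integers; write $k=n_0-\ell$, $k_0=n_0-\ell_0$, $k_1=n_0-\ell_1$. For $0\le\ell<n_0$ let $$\rho_\ell=\sqrt{\frac{\mu^2/4}{\mu^2/4+n_0-\ell}}+i\sqrt{\frac{n_0-\ell}{\mu^2/4+n_0-\ell}},\qquad\eta_\ell=\rho_0^2\rho_1^2\cdots\rho_\ell^2 .$$ Then for any complex numbers $g_{\ell_0},\dots,g_{\ell_1}$, $$\Big|\Re\sum_{\ell=\ell_0}^{\ell_1}g_\ell\eta_\ell\Big|\le c\big(\mu k_1^{-1/2}+1\big)|g_{\ell_1}|+c\sum_{\ell=\ell_0}^{\ell_1-1}\big(\mu k^{-1/2}+1\big)|g_{\ell+1}-g_\ell|,$$ $$\Big|\Re\sum_{\ell=\ell_0}^{\ell_1}g_\ell\eta_\ell^2\Big|\le c\big(\mu k_1^{-1/2}+\mu^{-1}k_0^{1/2}\big)|g_{\ell_1}|+c\sum_{\ell=\ell_0}^{\ell_1-1}\big(\mu k^{-1/2}+\mu^{-1}k_0^{1/2}\big)|g_{\ell+1}-g_\ell|.$$ *)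

From Stdlib Require Import Reals.
Open Scope R_scope.

Definition Cx : Type := (R * R)%type.
Definition Cre (z : Cx) : R := fst z.
Definition Cim (z : Cx) : R := snd z.
Definition Cmul (z w : Cx) : Cx :=
  (Cre z * Cre w - Cim z * Cim w, Cre z * Cim w + Cim z * Cre w).
Definition Csub (z w : Cx) : Cx := (Cre z - Cre w, Cim z - Cim w).
Definition Cmod (z : Cx) : R := sqrt (Cre z ^ 2 + Cim z ^ 2).
Definition Csum (s m : nat) (f : nat -> Cx) : Cx :=
  (sum_f s m (fun l => Cre (f l)), sum_f s m (fun l => Cim (f l))).

Definition n0_of (mu n : R) : R := n - mu ^ 2 / 4 - 1 / 2.

Definition rho (mu n : R) (l : nat) : Cx :=
  let n0 := n0_of mu n in
  (sqrt ((mu ^ 2 / 4) / (mu ^ 2 / 4 + n0 - INR l)),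
   sqrt ((n0 - INR l) / (mu ^ 2 / 4 + n0 - INR l))).

Fixpoint eta (mu n : R) (l : nat) : Cx :=
  match l with
  | O => Cmul (rho mu n 0) (rho mu n 0)
  | S l' => Cmul (eta mu n l') (Cmul (rho mu n l) (rho mu n l))
  end.

From Stdlib Require Import Reals Lra Lia Psatz.
Open Scope R_scope.

(* Write [E_j = w_0 ... w_(j-1)] with [w_j = rho_j^2] (resp. [rho_j^4]), so
   that [eta_l = E_(l+1)] (resp. [eta_l^2 = E_(l+1)]).  For unimodular
   [z = x + i y] with [y <> 0] one has [z^2 - 1 = 2 i y z], hence
   [z^2 = (z^2 - 1) D] with [D = 1/2 - i cot(z)/2], [cot z = x / y].  Thus
   [E_(j+1) = (E_(j+1) - E_j) D_j], and a first summation by parts, using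
   [|E_j| = 1] and the monotonicity of [cot z_j], bounds every partial sum
   [E_(a+1) + ... + E_(N+1)] by [1 + 2 |cot z_N| + |cot z_a|].  A second
   summation by parts transfers this to the weighted sums [sum g_l E_(l+1)].
   Finally [cot rho_j = mu / (2 sqrt k_j)] and
   [cot (rho_j^2) = (cot rho_j - 1 / cot rho_j) / 2] are nondecreasing in [j],
   and comparing weights gives the theorem with [c = 4]. *)

Definition Cone : Cx := (1, 0).
Definition Cadd (z w : Cx) : Cx := (Cre z + Cre w, Cim z + Cim w).
Definition Csq (z : Cx) : Cx := Cmul z z.
Definition unimodular (z : Cx) : Prop := Cre z ^ 2 + Cim z ^ 2 = 1.
Definition cot (z : Cx) : R := Cre z / Cim z.

Lemma Cx_eq (z w : Cx) : Cre z = Cre w -> Cim z = Cim w -> z = w.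
Proof. destruct z, w; simpl; intros; subst; reflexivity. Qed.

Ltac Cring := apply Cx_eq; cbv [Cone Cadd Csq Cmul Csub Cre Cim fst snd]; ring.

Lemma Cmod_ge0 (z : Cx) : 0 <= Cmod z.
Proof. apply sqrt_pos. Qed.

Lemma Cmod_sq (z : Cx) : Cmod z ^ 2 = Cre z ^ 2 + Cim z ^ 2.
Proof. unfold Cmod. apply pow2_sqrt. nra. Qed.

Lemma Cmod_unimodular (z : Cx) : unimodular z -> Cmod z = 1.
Proof. intros H. unfold Cmod. rewrite H. apply sqrt_1. Qed.

Lemma Cmod_mul (z w : Cx) : Cmod (Cmul z w) = Cmod z * Cmod w.
Proof.
  unfold Cmod. rewrite <- sqrt_mult by nra. f_equal.
  cbv [Cmul Cre Cim fst snd]; ring.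
Qed.

Lemma Cmod_add_le (z w : Cx) : Cmod (Cadd z w) <= Cmod z + Cmod w.
Proof.
  pose proof (Cmod_sq z) as Hz; pose proof (Cmod_sq w) as Hw.
  pose proof (Cmod_ge0 z); pose proof (Cmod_ge0 w).
  destruct z as [a b], w as [c d]; cbv [Cre Cim fst snd] in Hz, Hw.
  assert (cauchy_schwarz : a * c + b * d <= Cmod (a, b) * Cmod (c, d)).
  { apply Rsqr_incr_0_var; [|apply Rmult_le_pos; assumption].
    unfold Rsqr. pose proof (pow2_ge_0 (a * d - b * c)).
    replace (Cmod (a, b) * Cmod (c, d) * (Cmod (a, b) * Cmod (c, d)))
      with (Cmod (a, b) ^ 2 * Cmod (c, d) ^ 2) by ring.
    rewrite Hz, Hw. nra. }
  unfold Cadd, Cmod at 1; cbv [Cre Cim fst snd].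
  rewrite <- (sqrt_pow2 (Cmod (a, b) + Cmod (c, d))) by lra.
  apply sqrt_le_1_alt. nra.
Qed.

Lemma Cmod_sub_le (z w : Cx) : Cmod (Csub z w) <= Cmod z + Cmod w.
Proof.
  replace (Csub z w) with (Cadd z (- Cre w, - Cim w)) by Cring.
  replace (Cmod w) with (Cmod (- Cre w, - Cim w))
    by (unfold Cmod; cbv [Cre Cim fst snd]; f_equal; ring).
  apply Cmod_add_le.
Qed.

Lemma Rabs_Cre_le (z : Cx) : Rabs (Cre z) <= Cmod z.
Proof.
  rewrite <- sqrt_Rsqr_abs. apply sqrt_le_1_alt. unfold Rsqr. nra.
Qed.

Definition Cpsum (f : nat -> Cx) (N : nat) : Cx :=
  (sum_f_R0 (fun t => Cre (f t)) N, sum_f_R0 (fun t => Cim (f t)) N).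

Lemma Cpsum_0 (f : nat -> Cx) : Cpsum f 0 = f 0%nat.
Proof. apply Cx_eq; reflexivity. Qed.

Lemma Cpsum_S (f : nat -> Cx) (N : nat) :
  Cpsum f (S N) = Cadd (Cpsum f N) (f (S N)).
Proof. reflexivity. Qed.

Lemma Cpsum_ext (f h : nat -> Cx) (N : nat) :
  (forall t, (t <= N)%nat -> f t = h t) -> Cpsum f N = Cpsum h N.
Proof.
  intros Hfh. unfold Cpsum.
  f_equal; apply sum_eq; intros t Ht; rewrite Hfh by exact Ht; reflexivity.
Qed.

Lemma Csum_shift (a N : nat) (f : nat -> Cx) :
  Csum a (N + a) f = Cpsum (fun t => f (t + a)%nat) N.
Proof. unfold Csum, sum_f, Cpsum. replace (N + a - a)%nat with N by lia. reflexivity. Qed.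

Lemma Cmod_Cpsum_le (f : nat -> Cx) (N : nat) :
  Cmod (Cpsum f N) <= sum_f_R0 (fun t => Cmod (f t)) N.
Proof.
  induction N as [|N IH].
  - rewrite Cpsum_0. apply Rle_refl.
  - rewrite Cpsum_S. eapply Rle_trans; [apply Cmod_add_le|]. simpl. lra.
Qed.

Lemma Cpsum_telescope (E : nat -> Cx) (N : nat) :
  Cpsum (fun t => Csub (E (S t)) (E t)) N = Csub (E (S N)) (E 0%nat).
Proof.
  induction N as [|N IH].
  - apply Cpsum_0.
  - rewrite Cpsum_S, IH. Cring.
Qed.

Lemma sum_telescope (c : nat -> R) (N : nat) :
  sum_f_R0 (fun t => c (S t) - c t) N = c (S N) - c 0%nat.
Proof. induction N as [|N IH]; simpl; [|rewrite IH]; ring. Qed.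

Lemma abel_summation (g v : nat -> Cx) (m : nat) :
  Cpsum (fun t => Cmul (g t) (v t)) (S m) =
  Csub (Cmul (g (S m)) (Cpsum v (S m)))
       (Cpsum (fun t => Cmul (Csub (g (S t)) (g t)) (Cpsum v t)) m).
Proof.
  induction m as [|m IH].
  - apply Cx_eq; simpl; ring.
  - rewrite Cpsum_S, IH, (Cpsum_S v (S m)),
      (Cpsum_S (fun t => Cmul (Csub (g (S t)) (g t)) (Cpsum v t)) m).
    Cring.
Qed.

Lemma abel_bound (g v : nat -> Cx) (K : nat -> R) (m : nat) :
  (forall t, (t <= S m)%nat -> Cmod (Cpsum v t) <= K t) ->
  Cmod (Cpsum (fun t => Cmul (g t) (v t)) (S m)) <=
    K (S m) * Cmod (g (S m))
    + sum_f_R0 (fun t => K t * Cmod (Csub (g (S t)) (g t))) m.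
Proof.
  intros HK. rewrite abel_summation.
  eapply Rle_trans; [apply Cmod_sub_le|]. apply Rplus_le_compat.
  - rewrite Cmod_mul, Rmult_comm.
    apply Rmult_le_compat_r; [apply Cmod_ge0 | apply HK; lia].
  - eapply Rle_trans; [apply Cmod_Cpsum_le|]. apply sum_Rle. intros t Ht.
    rewrite Cmod_mul, Rmult_comm.
    apply Rmult_le_compat_r; [apply Cmod_ge0 | apply HK; lia].
Qed.

Fixpoint cprod (w : nat -> Cx) (j : nat) : Cx :=
  match j with
  | O => Cone
  | S j' => Cmul (cprod w j') (w j')
  end.

(* For unimodular [z = x + i y] with [y <> 0]: [z^2 = (z^2 - 1)(1/2 - i x/(2y))],
   since [z^2 - 1 = 2 i y z]. *)
Lemma Csq_factor (z : Cx) : unimodular z -> Cim z <> 0 ->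
  Csq z = Cmul (Csub (Csq z) Cone) (1/2, - cot z / 2).
Proof.
  unfold unimodular, cot. destruct z as [x y]; cbv [Cre Cim fst snd].
  intros Hunit Hy. apply Cx_eq; cbv [Csq Cmul Csub Cone Cre Cim fst snd].
  - replace (x * x - y * y) with
      ((x * x - y * y - 1) * (1/2) - (x * y + y * x) * (- (x / y) / 2)
       + (x ^ 2 + y ^ 2 - 1) * (-1/2)) at 1 by (field; exact Hy).
    rewrite Hunit. ring.
  - replace (x * y + y * x) with
      ((x * x - y * y - 1) * (- (x / y) / 2) + (x * y + y * x) * (1/2)
       + (x ^ 2 + y ^ 2 - 1) * (x / (2 * y))) at 1 by (field; exact Hy).
    rewrite Hunit. field. exact Hy.
Qed.

Lemma Csq_unimodular (z : Cx) : unimodular z -> unimodular (Csq z).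
Proof.
  unfold unimodular. intros H.
  replace (Cre (Csq z) ^ 2 + Cim (Csq z) ^ 2) with ((Cre z ^ 2 + Cim z ^ 2) ^ 2)
    by (cbv [Csq Cmul Cre Cim fst snd]; ring).
  rewrite H. ring.
Qed.

Lemma cot_Csq (z : Cx) : Cre z <> 0 -> Cim z <> 0 ->
  cot (Csq z) = (cot z - / cot z) / 2.
Proof.
  unfold cot. destruct z as [x y]; cbv [Csq Cmul Cre Cim fst snd]. intros Hx Hy.
  field. repeat split; try assumption.
  intros Hxy. assert (Hprod : x * y = 0) by lra.
  destruct (Rmult_integral _ _ Hprod); contradiction.
Qed.

Lemma Cmod_half (c : R) : Cmod (1/2, - c / 2) <= 1/2 + Rabs c / 2.
Proof.
  unfold Cmod; cbv [Cre Cim fst snd].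
  pose proof (Rabs_pos c).
  rewrite <- (sqrt_pow2 (1/2 + Rabs c / 2)) by lra.
  apply sqrt_le_1_alt.
  replace ((- c / 2) ^ 2) with (Rabs c ^ 2 / 4) by (rewrite (pow2_abs c); field).
  nra.
Qed.

Lemma Cmod_half_sub (u v : R) : Cmod (Csub (1/2, u) (1/2, v)) = Rabs (u - v).
Proof.
  unfold Cmod, Csub; cbv [Cre Cim fst snd].
  rewrite <- sqrt_Rsqr_abs. f_equal. unfold Rsqr. ring.
Qed.

Section UnimodularSquares.

Variables (z : nat -> Cx) (b : nat).
Hypothesis z_unimodular : forall j, (j <= b)%nat -> unimodular (z j).
Hypothesis z_Im_neq0 : forall j, (j <= b)%nat -> Cim (z j) <> 0.
Hypothesis z_cot_le : forall j, (j < b)%nat -> cot (z j) <= cot (z (S j)).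

Let E : nat -> Cx := cprod (fun j => Csq (z j)).

Lemma cprod_Cmod (j : nat) : (j <= S b)%nat -> Cmod (E j) = 1.
Proof.
  induction j as [|j IH]; intros Hj.
  - apply Cmod_unimodular. unfold unimodular; cbv [E cprod Cone Cre Cim fst snd]; ring.
  - unfold E; simpl. rewrite Cmod_mul. fold E. rewrite IH by lia.
    rewrite Cmod_unimodular by (apply Csq_unimodular, z_unimodular; lia). ring.
Qed.

Lemma cprod_step (j : nat) : (j <= b)%nat ->
  E (S j) = Cmul (Csub (E (S j)) (E j)) (1/2, - cot (z j) / 2).
Proof.
  intros Hj. unfold E; simpl. fold E.
  rewrite (Csq_factor (z j)) at 1
    by (first [apply z_unimodular | apply z_Im_neq0]; exact Hj).
  Cring.
Qed.

Lemma cprod_partial_sums (a N : nat) : (N + a <= b)%nat ->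
  Cmod (Cpsum (fun t => E (S (t + a))) N)
    <= 1 + 2 * Rabs (cot (z (N + a)%nat)) + Rabs (cot (z a)).
Proof.
  intros HN. destruct N as [|m].
  - rewrite Cpsum_0, cprod_Cmod by lia.
    pose proof (Rabs_pos (cot (z a))). pose proof (Rabs_pos (cot (z (0 + a)%nat))). lra.
  - set (D := fun t => ((1/2, - cot (z (t + a)%nat) / 2) : Cx)).
    rewrite (Cpsum_ext _ (fun t => Cmul (D t) (Csub (E (S (t + a))) (E (t + a)%nat))))
      by (intros t Ht; unfold D; rewrite cprod_step at 1 by lia; Cring).
    (* The partial sums of the increments telescope to [E_(a+t+1) - E_a]. *)
    eapply Rle_trans; [apply (abel_bound _ _ (fun _ => 2))|].
    { intros t Ht. rewrite (Cpsum_telescope (fun s => E (s + a)%nat)).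
      eapply Rle_trans; [apply Cmod_sub_le|].
      rewrite !cprod_Cmod by lia. lra. }
    (* The increments of [D] telescope too, because [cot z_j] is monotone. *)
    assert (HD : forall t, (t <= m)%nat ->
      2 * Cmod (Csub (D (S t)) (D t)) = cot (z (S t + a)%nat) - cot (z (t + a)%nat)).
    { intros t Ht. unfold D. rewrite Cmod_half_sub.
      assert (cot (z (t + a)%nat) <= cot (z (S t + a)%nat)) by (apply z_cot_le; lia).
      rewrite Rabs_left1 by lra. lra. }
    rewrite (sum_eq _ _ _ HD), (sum_telescope (fun t => cot (z (t + a)%nat))).
    pose proof (Cmod_half (cot (z (S m + a)%nat))) as HDlast.
    pose proof (Rle_abs (cot (z (S m + a)%nat))).
    pose proof (Rle_abs (- cot (z a))). rewrite Rabs_Ropp in *.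
    unfold D. cbv beta. rewrite Nat.add_0_l. lra.
Qed.

Definition partial_sum_weight (a j : nat) : R :=
  1 + 2 * Rabs (cot (z j)) + Rabs (cot (z a)).

Lemma cprod_weighted_sum (g : nat -> Cx) (a m : nat) : (S m + a <= b)%nat ->
  Rabs (Cre (Cpsum (fun t => Cmul (g (t + a)%nat) (E (S (t + a)))) (S m))) <=
    partial_sum_weight a (S m + a) * Cmod (g (S m + a)%nat)
    + sum_f_R0 (fun t => partial_sum_weight a (t + a)
                         * Cmod (Csub (g (S (t + a))) (g (t + a)%nat))) m.
Proof.
  intros Hm. eapply Rle_trans; [apply Rabs_Cre_le|].
  apply (abel_bound (fun t => g (t + a)%nat) (fun t => E (S (t + a)))
           (fun t => partial_sum_weight a (t + a))).
  intros t Ht. apply cprod_partial_sums. lia.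
Qed.

End UnimodularSquares.

Lemma abel_rhs_le (K W D : nat -> R) (G c : R) (a m : nat) :
  (forall j, (a <= j <= S m + a)%nat -> K j <= c * W j) ->
  0 <= G -> (forall j, 0 <= D j) ->
  K (S m + a)%nat * G + sum_f_R0 (fun t => K (t + a)%nat * D (t + a)%nat) m
    <= c * W (S m + a)%nat * G + c * sum_f a (S m + a - 1) (fun l => W l * D l).
Proof.
  intros HKW HG HD. apply Rplus_le_compat.
  - apply Rmult_le_compat_r; [exact HG | apply HKW; lia].
  - unfold sum_f. replace (S m + a - 1 - a)%nat with m by lia.
    rewrite scal_sum. apply sum_Rle. intros t Ht.
    replace (W (t + a)%nat * D (t + a)%nat * c) with (c * W (t + a)%nat * D (t + a)%nat)
      by ring.
    apply Rmult_le_compat_r; [apply HD | apply HKW; lia].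
Qed.

Lemma k_pos (mu n : R) (l1 j : nat) :
  INR l1 < n0_of mu n -> (j <= l1)%nat -> 0 < n0_of mu n - INR j.
Proof. intros Hl1 Hj. apply le_INR in Hj. lra. Qed.

Lemma rho_props (mu n : R) (j : nat) : 0 < mu -> 0 < n0_of mu n - INR j ->
  unimodular (rho mu n j) /\ 0 < Cre (rho mu n j) /\ 0 < Cim (rho mu n j) /\
  cot (rho mu n j) = mu / (2 * sqrt (n0_of mu n - INR j)).
Proof.
  intros Hmu Hk.
  replace (rho mu n j) with
    ((sqrt ((mu ^ 2 / 4) / (mu ^ 2 / 4 + (n0_of mu n - INR j))),
      sqrt ((n0_of mu n - INR j) / (mu ^ 2 / 4 + (n0_of mu n - INR j)))) : Cx)
    by (unfold rho; f_equal; f_equal; f_equal; ring).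
  unfold unimodular, cot; cbv [Cre Cim fst snd].
  set (k := n0_of mu n - INR j) in *.
  assert (Hmu2 : 0 < mu ^ 2 / 4) by (pose proof (pow_lt mu 2 Hmu); lra).
  assert (Hsum : 0 < mu ^ 2 / 4 + k) by lra.
  split; [|split; [|split]].
  - rewrite !pow2_sqrt by (apply Rlt_le, Rdiv_lt_0_compat; lra). field. lra.
  - apply sqrt_lt_R0, Rdiv_lt_0_compat; lra.
  - apply sqrt_lt_R0, Rdiv_lt_0_compat; lra.
  - rewrite (sqrt_div_alt (mu ^ 2 / 4)), (sqrt_div_alt k) by lra.
    replace (sqrt (mu ^ 2 / 4)) with (mu / 2)
      by (replace (mu ^ 2 / 4) with ((mu / 2) ^ 2) by field;
          symmetry; apply sqrt_pow2; lra).
    pose proof (sqrt_lt_R0 _ Hsum). pose proof (sqrt_lt_R0 _ Hk).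
    field. lra.
Qed.

Lemma rho_cot_le (mu n : R) (l1 i j : nat) :
  0 < mu -> INR l1 < n0_of mu n -> (i <= j <= l1)%nat ->
  0 < cot (rho mu n i) <= cot (rho mu n j).
Proof.
  intros Hmu Hl1 Hij.
  pose proof (k_pos mu n l1 i Hl1 ltac:(lia)) as Hki.
  pose proof (k_pos mu n l1 j Hl1 ltac:(lia)) as Hkj.
  destruct (rho_props mu n i Hmu Hki) as (_ & _ & _ & ->).
  destruct (rho_props mu n j Hmu Hkj) as (_ & _ & _ & ->).
  assert (Hsqrt : sqrt (n0_of mu n - INR j) <= sqrt (n0_of mu n - INR i)).
  { apply sqrt_le_1_alt. assert (INR i <= INR j) by (apply le_INR; lia). lra. }
  pose proof (sqrt_lt_R0 _ Hkj).
  split.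
  - apply Rdiv_lt_0_compat; lra.
  - unfold Rdiv. apply Rmult_le_compat_l; [lra|]. apply Rinv_le_contravar; lra.
Qed.

Lemma eta_cprod (mu n : R) (l : nat) :
  eta mu n l = cprod (fun j => Csq (rho mu n j)) (S l).
Proof.
  induction l as [|l IH].
  - simpl. Cring.
  - simpl. rewrite IH. reflexivity.
Qed.

Lemma eta_sq_cprod (mu n : R) (l : nat) :
  Cmul (eta mu n l) (eta mu n l) = cprod (fun j => Csq (Csq (rho mu n j))) (S l).
Proof.
  induction l as [|l IH].
  - simpl. Cring.
  - simpl in *. rewrite <- IH. Cring.
Qed.

Lemma weight_cot (mu n : R) (j : nat) : 0 < mu -> 0 < n0_of mu n - INR j ->
  mu / sqrt (n0_of mu n - INR j) = 2 * cot (rho mu n j) /\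
  sqrt (n0_of mu n - INR j) / mu = / cot (rho mu n j) / 2.
Proof.
  intros Hmu Hk. destruct (rho_props mu n j Hmu Hk) as (_ & _ & _ & ->).
  pose proof (sqrt_lt_R0 _ Hk). split; field; lra.
Qed.

Lemma weight_le_first (r0 r : R) : 0 < r0 <= r ->
  1 + 2 * Rabs r + Rabs r0 <= 4 * (2 * r + 1).
Proof. intros Hr. rewrite !Rabs_right by lra. lra. Qed.

Lemma weight_le_second (r0 r : R) : 0 < r0 <= r ->
  1 + 2 * Rabs ((r - / r) / 2) + Rabs ((r0 - / r0) / 2) <= 4 * (2 * r + / r0 / 2).
Proof.
  intros Hr.
  assert (Hinv : 0 < / r <= / r0)
    by (split; [apply Rinv_0_lt_compat | apply Rinv_le_contravar]; lra).
  assert (Hinv0 : 0 < / r0) by (apply Rinv_0_lt_compat; lra).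
  (* [1 <= (r0 + 1/r0) / 2] by the AM-GM inequality. *)
  assert (Hamgm : 2 <= r0 + / r0).
  { assert (r0 * / r0 = 1) by (field; lra). pose proof (pow2_ge_0 (r0 - / r0)). nra. }
  assert (Habs : forall x y, 0 < x -> 0 < y -> Rabs ((x - y) / 2) <= (x + y) / 2)
    by (intros x y Hx Hy; apply Rabs_le; lra).
  pose proof (Habs r (/ r) ltac:(lra) ltac:(lra)).
  pose proof (Habs r0 (/ r0) ltac:(lra) ltac:(lra)).
  lra.
Qed.

Lemma eta_sum_bound (mu n : R) (l0 l1 : nat) (g : nat -> Cx) :
  0 < mu -> (l0 < l1)%nat -> INR l1 < n0_of mu n ->
  Rabs (Cre (Csum l0 l1 (fun l => Cmul (g l) (eta mu n l))))
    <= 4 * (mu / sqrt (n0_of mu n - INR l1) + 1) * Cmod (g l1)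
       + 4 * sum_f l0 (l1 - 1)
               (fun l => (mu / sqrt (n0_of mu n - INR l) + 1)
                         * Cmod (Csub (g (S l)) (g l))).
Proof.
  intros Hmu Hl Hl1.
  destruct (Nat.lt_exists_pred 0 (l1 - l0)) as [m [Hm _]]; [lia|].
  replace l1 with (S m + l0)%nat in * by lia.
  rewrite (Csum_shift l0 (S m)).
  rewrite (Cpsum_ext _ (fun t => Cmul (g (t + l0)%nat)
                                  (cprod (fun j => Csq (rho mu n j)) (S (t + l0)))))
    by (intros t _; rewrite eta_cprod; reflexivity).
  eapply Rle_trans.
  - apply (cprod_weighted_sum (rho mu n) (S m + l0)); try lia.
    + intros j Hj. apply rho_props; [exact Hmu | apply (k_pos _ _ _ _ Hl1 Hj)].
    + intros j Hj. apply Rgt_not_eq.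
      apply rho_props; [exact Hmu | apply (k_pos _ _ _ _ Hl1 Hj)].
    + intros j Hj. apply (rho_cot_le mu n (S m + l0)); auto with arith.
  - apply (abel_rhs_le (partial_sum_weight (rho mu n) l0)
             (fun l => mu / sqrt (n0_of mu n - INR l) + 1)
             (fun l => Cmod (Csub (g (S l)) (g l))));
      [|apply Cmod_ge0|intros; apply Cmod_ge0].
    intros j Hj. unfold partial_sum_weight.
    rewrite (proj1 (weight_cot mu n j Hmu (k_pos mu n (S m + l0) j Hl1 ltac:(lia)))).
    apply weight_le_first. split.
    + apply (rho_cot_le mu n (S m + l0) l0 l0); auto with arith.
    + apply (rho_cot_le mu n (S m + l0)); auto with arith; lia.
Qed.

Lemma rho_sq_props (mu n : R) (j : nat) : 0 < mu -> 0 < n0_of mu n - INR j ->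
  unimodular (Csq (rho mu n j)) /\ Cim (Csq (rho mu n j)) <> 0 /\
  cot (Csq (rho mu n j)) = (cot (rho mu n j) - / cot (rho mu n j)) / 2.
Proof.
  intros Hmu Hk. destruct (rho_props mu n j Hmu Hk) as (Hunit & Hre & Him & _).
  split; [|split].
  - apply Csq_unimodular, Hunit.
  - cbv [Csq Cmul Cre Cim fst snd] in *. nra.
  - apply cot_Csq; lra.
Qed.

Lemma eta_sq_sum_bound (mu n : R) (l0 l1 : nat) (g : nat -> Cx) :
  0 < mu -> (l0 < l1)%nat -> INR l1 < n0_of mu n ->
  Rabs (Cre (Csum l0 l1 (fun l => Cmul (g l) (Cmul (eta mu n l) (eta mu n l)))))
    <= 4 * (mu / sqrt (n0_of mu n - INR l1) + sqrt (n0_of mu n - INR l0) / mu)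
         * Cmod (g l1)
       + 4 * sum_f l0 (l1 - 1)
               (fun l => (mu / sqrt (n0_of mu n - INR l) + sqrt (n0_of mu n - INR l0) / mu)
                         * Cmod (Csub (g (S l)) (g l))).
Proof.
  intros Hmu Hl Hl1.
  destruct (Nat.lt_exists_pred 0 (l1 - l0)) as [m [Hm _]]; [lia|].
  replace l1 with (S m + l0)%nat in * by lia.
  pose proof (fun j (Hj : (j <= S m + l0)%nat) => k_pos mu n (S m + l0) j Hl1 Hj) as Hk.
  assert (Hcot : forall i j, (i <= j <= S m + l0)%nat ->
            0 < cot (rho mu n i) <= cot (rho mu n j))
    by (intros i j Hij; apply (rho_cot_le mu n (S m + l0)); auto).
  rewrite (Csum_shift l0 (S m)).
  rewrite (Cpsum_ext _ (fun t => Cmul (g (t + l0)%nat)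
                           (cprod (fun j => Csq (Csq (rho mu n j))) (S (t + l0)))))
    by (intros t _; rewrite eta_sq_cprod; reflexivity).
  eapply Rle_trans.
  - apply (cprod_weighted_sum (fun j => Csq (rho mu n j)) (S m + l0)); try lia.
    + intros j Hj. apply (rho_sq_props mu n j Hmu (Hk j Hj)).
    + intros j Hj. apply (rho_sq_props mu n j Hmu (Hk j Hj)).
    + intros j Hj.
      rewrite (proj2 (proj2 (rho_sq_props mu n j Hmu (Hk j ltac:(lia))))),
              (proj2 (proj2 (rho_sq_props mu n (S j) Hmu (Hk (S j) ltac:(lia))))).
      destruct (Hcot j (S j) ltac:(lia)) as [Hpos Hle].
      assert (/ cot (rho mu n (S j)) <= / cot (rho mu n j))
        by (apply Rinv_le_contravar; lra).
      lra.
  - apply (abel_rhs_le (partial_sum_weight (fun j => Csq (rho mu n j)) l0)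
             (fun l => mu / sqrt (n0_of mu n - INR l) + sqrt (n0_of mu n - INR l0) / mu)
             (fun l => Cmod (Csub (g (S l)) (g l))));
      [|apply Cmod_ge0|intros; apply Cmod_ge0].
    intros j Hj. unfold partial_sum_weight.
    rewrite (proj2 (proj2 (rho_sq_props mu n j Hmu (Hk j ltac:(lia))))),
            (proj2 (proj2 (rho_sq_props mu n l0 Hmu (Hk l0 ltac:(lia))))),
            (proj1 (weight_cot mu n j Hmu (Hk j ltac:(lia)))),
            (proj2 (weight_cot mu n l0 Hmu (Hk l0 ltac:(lia)))).
    apply weight_le_second. split.
    + apply (Hcot l0 l0). lia.
    + apply Hcot. lia.
Qed.

Theorem mainTheorem16 :
  exists c : R,
  forall (mu n : R) (l0 l1 : nat) (g : nat -> Cx),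
    0 < mu ->
    0 < n0_of mu n ->
    (l0 < l1)%nat ->
    INR l1 < n0_of mu n ->
    let n0 := n0_of mu n in
    let k := fun l : nat => n0 - INR l in
    let k0 := k l0 in
    let k1 := k l1 in
    Rabs (Cre (Csum l0 l1 (fun l => Cmul (g l) (eta mu n l))))
      <= c * (mu / sqrt k1 + 1) * Cmod (g l1)
         + c * sum_f l0 (l1 - 1)
                 (fun l => (mu / sqrt (k l) + 1) * Cmod (Csub (g (S l)) (g l)))
    /\
    Rabs (Cre (Csum l0 l1
                 (fun l => Cmul (g l) (Cmul (eta mu n l) (eta mu n l)))))
      <= c * (mu / sqrt k1 + sqrt k0 / mu) * Cmod (g l1)
         + c * sum_f l0 (l1 - 1)
                 (fun l => (mu / sqrt (k l) + sqrt k0 / mu)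
                           * Cmod (Csub (g (S l)) (g l))).
Proof.
  exists 4. intros mu n l0 l1 g Hmu _ Hl Hl1. cbv zeta.
  split.
  - apply eta_sum_bound; assumption.
  - apply eta_sq_sum_bound; assumption.
Qed.
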